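(* Let $\phi\in C^3((0,\infty))$, $\eta=\phi'$ and $\hat\eta(r)=\eta(r)+2\eta(2r)$, and suppose there are constants $0<a_0<\tilde r_1<\tilde r_2<2a_0$ and $a_1>a_0$ such that: $\eta'(r)>0$ for $0<r<\tilde r_1$ and $\eta'(r)<0$ for $r>\tilde r_1$; $\eta''(r)<0$ for $0<r<\tilde r_2$ and $\eta''(r)>0$ for $r>\tilde r_2$; $\hat\eta(r)<0$ for $0<r<a_0$ and $\hat\eta(r)>0$ for $r>a_0$; $\hat\eta'(r)>0$ for $0<r<a_1$ and $\hat\eta'(r)<0$ for $r>a_1$. Let $N,K$ be positive integers with $K<N-1$. For $\mathbf r=(r_{-N},\dots,r_N)\in(0,\infty)^{2N+1}$ define $\hat{\mathbf\Psi}^L(\mathbf r)$ by $\hat\psi^L_j(\mathbf r)=\hat\eta(r_j)$, $j=-N,\dots,N$, and $\hat{\mathbf\Psi}^F(\mathbf r)$ by $\hat\psi^F_j(\mathbf r)=\eta(r_j)+2\eta(2r_j)$ for $-N\le j\le -K$ and for $K\le j\le N$, and $\hat\psi^F_j(\mathbf r)=\eta(r_j)+\eta(r_j+r_{j-1})+\eta(r_j+r_{j+1})+[2\eta(2r_K)-\eta(r_K+r_{K-1})-\eta(r_K+r_{K+1})]$ for $-K+1\le j\le K-1$. Fix $\mathbf\Phi\in\mathbb R^{2N+1}$ and set $\mathbf h(\mathbf r,t)=(1-t)[\hat{\mathbf\Psi}^L(\mathbf r)-\mathbf\Phi]+t[\hat{\mathbf\Psi}^F(\mathbf r)-\mathbf\Phi]$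 for $t\in[0,1]$. Let $0<r_L<r_U<a_1$ and $\Omega=(r_L,r_U)^{2N+1}$. Suppose that for every $i=-N,\dots,N$, every $t\in[0,1]$ and every $\mathbf r\in\partial\Omega$: $h_i(\mathbf r,t)>0$ if $r_i=r_U$, and $h_i(\mathbf r,t)<0$ if $r_i=r_L$. If the Jacobian matrix $D\hat{\mathbf\Psi}^F(\mathbf r)$ (with entries $D_j\hat\psi^F_i(\mathbf r)$) is strictly diagonally dominant with positive diagonal, i.e. $D_i\hat\psi^F_i(\mathbf r)>\sum_{j\ne i}|D_j\hat\psi^F_i(\mathbf r)|$ for all $i$, for all $\mathbf r\in\Omega$, then there exists a unique solution $\mathbf r\in\Omega$ of $\hat{\mathbf\Psi}^F(\mathbf r)=\mathbf\Phi$.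
   Context: $\hat{\mathbf\Psi}^L$ and $\hat{\mathbf\Psi}^F$ are the conjugate forces of the local and (symmetrized) force-based quasicontinuum approximations of a one-dimensional atomic chain with nearest and next-nearest neighbour pair interactions given by $\phi$. *)

From Stdlib Require Import Reals ZArith.
From Coquelicot Require Import Coquelicot.
Open Scope R_scope.

(* Configurations r = (r_{-N},...,r_N) are functions Z -> R; only the
   indices -N..N are meaningful. *)
Definition in_idx (N j : Z) : Prop := (- N <= j <= N)%Z.

Definition eta (phi : R -> R) : R -> R := Derive phi.
Definition eta_hat (phi : R -> R) (r : R) : R := eta phi r + 2 * eta phi (2 * r).

Definition psiL (phi : R -> R) (r : Z -> R) (j : Z) : R := eta_hat phi (r j).

Definition psiF (phi : R -> R) (K : Z) (r : Z -> R) (j : Z) : R :=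
  if andb (- K + 1 <=? j)%Z (j <=? K - 1)%Z then
    eta phi (r j) + eta phi (r j + r (j - 1)%Z) + eta phi (r j + r (j + 1)%Z)
    + (2 * eta phi (2 * r K) - eta phi (r K + r (K - 1)%Z)
       - eta phi (r K + r (K + 1)%Z))
  else eta phi (r j) + 2 * eta phi (2 * r j).

Definition hom (phi : R -> R) (K : Z) (Phi : Z -> R) (r : Z -> R) (t : R) (i : Z) : R :=
  (1 - t) * (psiL phi r i - Phi i) + t * (psiF phi K r i - Phi i).

Definition upd (r : Z -> R) (j : Z) (x : R) : Z -> R :=
  fun k => if Z.eqb k j then x else r k.

Definition DpsiF (phi : R -> R) (K : Z) (r : Z -> R) (i j : Z) : R :=
  Derive (fun x => psiF phi K (upd r j x) i) (r j).

Definition sum_idx (N : Z) (f : Z -> R) : R :=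
  sum_f_R0 (fun k => f (Z.of_nat k - N)%Z) (Z.to_nat (2 * N)).

Definition in_Omega (N : Z) (rL rU : R) (r : Z -> R) : Prop :=
  forall j, in_idx N j -> rL < r j < rU.

Definition in_bdry_Omega (N : Z) (rL rU : R) (r : Z -> R) : Prop :=
  (forall j, in_idx N j -> rL <= r j <= rU) /\
  (exists j, in_idx N j /\ (r j = rL \/ r j = rU)).

(* Only the boundary condition for h(., 1) and the diagonal dominance of D psi^F are needed.  Each psi^F_i is a finite sum of terms
   w * eta (al r_a + be r_b), so the mean value theorem along a segment gives
   psi^F_i(y) - psi^F_i(x) = sum_j D_j psi^F_i(p) (y_j - x_j) for some p in Omega, and diagonal
   dominance turns this into (psi^F_i(y) - psi^F_i(x)) (y_i - x_i) > 0 whenever |y_i - x_i| is the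
   largest coordinate difference.  For existence, solve the equations
   one at a time: when coordinate m+1 is prescribed to be s and the first m equations are solved,
   the same monotonicity makes the solution 1-Lipschitz in s for the sup norm, so it extends to
   s = r_L and s = r_U, where the boundary condition gives the (m+1)-th residual opposite signs; the
   intermediate value theorem then solves equation m+1. *)

From Stdlib Require Import Reals ZArith Lra Lia List.
From Stdlib Require Import Classical ClassicalEpsilon FunctionalExtensionality.
From Coquelicot Require Import Coquelicot.
Open Scope R_scope.

Definition in_box (N : Z) (lo hi : R) (r : Z -> R) : Prop :=
  forall j, in_idx N j -> lo <= r j <= hi.

Definition sup_continuous_at (N : Z) (G : (Z -> R) -> R) (x : Z -> R) : Prop :=
  forall eps, 0 < eps -> exists del, 0 < del /\ forall y,
    (forall j, in_idx N j -> Rabs (y j - x j) < del) -> Rabs (G y - G x) < eps.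

Definition box_continuous (N : Z) (lo hi : R) (F : (Z -> R) -> Z -> R) : Prop :=
  forall x i, in_box N lo hi x -> in_idx N i -> sup_continuous_at N (fun r => F r i) x.

Definition boundary_signs (N : Z) (lo hi : R) (F : (Z -> R) -> Z -> R) : Prop :=
  forall r i, in_idx N i -> in_bdry_Omega N lo hi r ->
    (r i = hi -> F r i > 0) /\ (r i = lo -> F r i < 0).

Definition max_coord_monotone (N : Z) (lo hi : R) (F : (Z -> R) -> Z -> R) : Prop :=
  forall x y i, in_Omega N lo hi x -> in_Omega N lo hi y -> in_idx N i ->
    (forall k, in_idx N k -> Rabs (y k - x k) <= Rabs (y i - x i)) ->
    y i <> x i -> (F y i - F x i) * (y i - x i) > 0.

Lemma exists_max_abs_idx (N : Z) (d : Z -> R) : (0 <= N)%Z ->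
  exists i, in_idx N i /\ forall k, in_idx N k -> Rabs (d k) <= Rabs (d i).
Proof.
  intro HN.
  assert (Hprefix : forall M : nat, exists m, (m <= M)%nat /\ forall k, (k <= M)%nat ->
            Rabs (d (Z.of_nat k - N)%Z) <= Rabs (d (Z.of_nat m - N)%Z)).
  { induction M as [|M [m [Hm Hmax]]].
    - exists 0%nat; split; [lia|]. intros k Hk. replace k with 0%nat by lia. lra.
    - destruct (Rle_dec (Rabs (d (Z.of_nat (S M) - N)%Z)) (Rabs (d (Z.of_nat m - N)%Z))).
      + exists m; split; [lia|]. intros k Hk.
        destruct (Nat.eq_dec k (S M)) as [->|]; [lra| apply Hmax; lia].
      + exists (S M); split; [lia|]. intros k Hk.
        destruct (Nat.eq_dec k (S M)) as [->|]; [lra|].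
        specialize (Hmax k ltac:(lia)); lra. }
  destruct (Hprefix (Z.to_nat (2 * N))) as [m [Hm Hmax]].
  exists (Z.of_nat m - N)%Z; split; [unfold in_idx; lia|].
  intros k Hk. unfold in_idx in Hk.
  specialize (Hmax (Z.to_nat (k + N)) ltac:(lia)).
  replace (Z.of_nat (Z.to_nat (k + N)) - N)%Z with k in Hmax by lia. exact Hmax.
Qed.

Lemma lipschitz_image_cvg (a sq : nat -> R) (e : R) :
  is_lim_seq sq e -> (forall k l, Rabs (a l - a k) <= Rabs (sq l - sq k)) ->
  exists l : R, is_lim_seq a l /\ forall k, Rabs (a k - l) <= Rabs (sq k - e).
Proof.
  intros Hsq Hlip.
  assert (Hcauchy : ex_lim_seq_cauchy a).
  { intros eps. destruct (proj2 (is_lim_seq_spec sq e) Hsq (pos_div_2 eps)) as [N0 HN0].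
    exists N0. intros n m Hn Hm.
    pose proof (Hlip m n). pose proof (HN0 n Hn). pose proof (HN0 m Hm). simpl in *.
    unfold Rabs in *; repeat destruct Rcase_abs; lra. }
  destruct (proj2 (ex_lim_seq_cauchy_corr a) Hcauchy) as [l Hl].
  exists l; split; [exact Hl|]. intro k.
  assert (Hle := is_lim_seq_le (fun n => Rabs (a n - a k)) (fun n => Rabs (sq n - sq k))
                   (Rabs (l - a k)) (Rabs (e - sq k)) (fun n => Hlip k n)).
  rewrite Rabs_minus_sym, (Rabs_minus_sym (sq k)). apply Hle.
  - apply (is_lim_seq_abs _ (l - a k)).
    apply is_lim_seq_minus'; [exact Hl| apply is_lim_seq_const].
  - apply (is_lim_seq_abs _ (e - sq k)).
    apply is_lim_seq_minus'; [exact Hsq| apply is_lim_seq_const].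
Qed.

Lemma is_lim_seq_halving (e c : R) : is_lim_seq (fun k => e + (/ 2) ^ S k * c) e.
Proof.
  assert (Hgeom : is_lim_seq (fun k => (/ 2) ^ S k) 0).
  { apply (is_lim_seq_incr_1 (fun k => (/ 2) ^ k)).
    apply is_lim_seq_geom. rewrite Rabs_pos_eq; lra. }
  assert (Hscal := is_lim_seq_scal_r _ c _ Hgeom). simpl in Hscal.
  rewrite Rmult_0_l in Hscal.
  assert (Hsum := is_lim_seq_plus' _ _ e 0 (is_lim_seq_const e) Hscal).
  rewrite Rplus_0_r in Hsum. exact Hsum.
Qed.

Section BoxZero.

Variables (N : Z) (rL rU : R) (F : (Z -> R) -> Z -> R).
Hypothesis N_nonneg : (0 <= N)%Z.
Hypothesis rL_lt_rU : rL < rU.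
Hypothesis F_cont : box_continuous N rL rU F.
Hypothesis F_bdry : boundary_signs N rL rU F.
Hypothesis F_mono : max_coord_monotone N rL rU F.

Lemma coord_diff_le_of_agree (P : Z -> Prop) (z z' : Z -> R) (c : R) : 0 <= c ->
  in_Omega N rL rU z -> in_Omega N rL rU z' ->
  (forall i, in_idx N i -> P i -> F z i = F z' i) ->
  (forall k, in_idx N k -> ~ P k -> Rabs (z' k - z k) <= c) ->
  forall j, in_idx N j -> Rabs (z' j - z j) <= c.
Proof.
  intros Hc Hz Hz' Heq Hout j Hj.
  destruct (exists_max_abs_idx N (fun k => z' k - z k) N_nonneg) as [i [Hi Hmax]].
  apply (Rle_trans _ _ _ (Hmax j Hj)).
  destruct (classic (P i)) as [HP|HnP]; [|exact (Hout i Hi HnP)].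
  destruct (Req_dec (z' i) (z i)) as [Hzi|Hzi].
  - rewrite Hzi, Rminus_diag, Rabs_R0. exact Hc.
  - pose proof (F_mono z z' i Hz Hz' Hi Hmax Hzi) as Hpos.
    rewrite (Heq i Hi HP), Rminus_diag, Rmult_0_l in Hpos. lra.
Qed.

Lemma zero_unique (z z' : Z -> R) :
  in_Omega N rL rU z -> in_Omega N rL rU z' ->
  (forall i, in_idx N i -> F z i = 0) -> (forall i, in_idx N i -> F z' i = 0) ->
  forall j, in_idx N j -> z' j = z j.
Proof.
  intros Hz Hz' H0 H0' j Hj.
  assert (Hdist := coord_diff_le_of_agree (fun _ => True) z z' 0 (Rle_refl 0) Hz Hz'
                     (fun i Hi _ => eq_trans (H0 i Hi) (eq_sym (H0' i Hi)))
                     (fun k _ Hk => False_ind _ (Hk I)) j Hj).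
  pose proof (Rabs_pos (z' j - z j)).
  apply Rminus_diag_uniq, Rabs_eq_0. lra.
Qed.

Section Path.

Variables (q : Z) (f : R -> Z -> R).
Hypothesis q_idx : in_idx N q.
Hypothesis f_in : forall s, rL < s < rU -> in_Omega N rL rU (f s).
Hypothesis f_q : forall s, rL < s < rU -> f s q = s.
Hypothesis f_lip : forall s s', rL < s < rU -> rL < s' < rU ->
  forall j, in_idx N j -> Rabs (f s' j - f s j) <= Rabs (s' - s).

Lemma path_limit (e : R) : rL <= e <= rU ->
  exists z, in_box N rL rU z /\ z q = e /\
    forall del, 0 < del -> exists s, rL < s < rU /\
      forall j, in_idx N j -> Rabs (f s j - z j) < del.
Proof.
  intros He.
  set (sq := fun k => e + (/ 2) ^ S k * ((rL + rU) / 2 - e)).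
  assert (sq_in : forall k, rL < sq k < rU).
  { intro k. assert (Ht : 0 < (/ 2) ^ S k <= / 2).
    { split; [apply pow_lt; lra|]. simpl.
      assert ((/ 2) ^ k <= 1) by (rewrite <- (pow1 k); apply pow_incr; lra). lra. }
    unfold sq. nra. }
  assert (sq_lim : is_lim_seq sq e) by apply is_lim_seq_halving.
  set (z := fun j => real (Lim_seq (fun k => f (sq k) j))).
  assert (z_lim : forall j, in_idx N j ->
            is_lim_seq (fun k => f (sq k) j) (z j) /\
            forall k, Rabs (f (sq k) j - z j) <= Rabs (sq k - e)).
  { intros j Hj.
    destruct (lipschitz_image_cvg (fun k => f (sq k) j) sq e sq_lim
                (fun k l => f_lip _ _ (sq_in k) (sq_in l) j Hj)) as [l [Hl Hbound]].
    unfold z. rewrite (is_lim_seq_unique _ _ Hl). simpl. split; [exact Hl| exact Hbound]. }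
  exists z. split; [|split].
  - intros j Hj. destruct (z_lim j Hj) as [Hl _].
    pose proof (fun k => f_in (sq k) (sq_in k) j Hj) as Hbox.
    split.
    + apply (is_lim_seq_le (fun _ => rL) (fun k => f (sq k) j) rL (z j));
        [intro k; specialize (Hbox k); lra| apply is_lim_seq_const| exact Hl].
    + apply (is_lim_seq_le (fun k => f (sq k) j) (fun _ => rU) (z j) rU);
        [intro k; specialize (Hbox k); lra| exact Hl| apply is_lim_seq_const].
  - destruct (z_lim q q_idx) as [Hl _].
    apply is_lim_seq_ext with (v := sq) in Hl; [|intro k; apply f_q, sq_in].
    apply Rbar_finite_eq. rewrite <- (is_lim_seq_unique _ _ Hl).
    exact (is_lim_seq_unique _ _ sq_lim).
  - intros del Hdel.
    destruct (proj2 (is_lim_seq_spec sq e) sq_lim (mkposreal del Hdel)) as [k0 Hk0].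
    exists (sq k0). split; [apply sq_in|]. intros j Hj.
    eapply Rle_lt_trans; [apply (z_lim j Hj)| apply Hk0; lia].
Qed.

Lemma path_value_near_endpoint (e : R) : rL <= e <= rU ->
  exists z, in_box N rL rU z /\ z q = e /\
    forall eps, 0 < eps -> exists s, rL < s < rU /\ Rabs (F (f s) q - F z q) < eps.
Proof.
  intros He. destruct (path_limit e He) as [z [Hz [Hzq Hnear]]].
  exists z. split; [exact Hz| split; [exact Hzq|]]. intros eps Heps.
  destruct (F_cont z q Hz q_idx eps Heps) as [del [Hdel Hcont]].
  destruct (Hnear del Hdel) as [s [Hs Hclose]].
  exists s. split; [exact Hs| exact (Hcont (f s) Hclose)].
Qed.

Lemma path_takes_negative : exists s, rL < s < rU /\ F (f s) q < 0.
Proof.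
  destruct (path_value_near_endpoint rL ltac:(lra)) as [z [Hz [Hzq Hnear]]].
  assert (Hneg : F z q < 0).
  { apply (proj2 (F_bdry z q q_idx (conj Hz (ex_intro _ q (conj q_idx (or_introl Hzq)))))).
    exact Hzq. }
  destruct (Hnear (- F z q) ltac:(lra)) as [s [Hs Hclose]].
  exists s. split; [exact Hs|]. apply Rabs_def2 in Hclose. lra.
Qed.

Lemma path_takes_positive : exists s, rL < s < rU /\ F (f s) q > 0.
Proof.
  destruct (path_value_near_endpoint rU ltac:(lra)) as [z [Hz [Hzq Hnear]]].
  assert (Hpos : F z q > 0).
  { apply (proj1 (F_bdry z q q_idx (conj Hz (ex_intro _ q (conj q_idx (or_intror Hzq)))))).
    exact Hzq. }
  destruct (Hnear (F z q) ltac:(lra)) as [s [Hs Hclose]].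
  exists s. split; [exact Hs|]. apply Rabs_def2 in Hclose. lra.
Qed.

Lemma path_continuous (s : R) : rL < s < rU -> continuity_pt (fun s => F (f s) q) s.
Proof.
  intros Hs. apply continuity_pt_locally. intros eps.
  assert (Hbox : in_box N rL rU (f s)).
  { intros j Hj. specialize (f_in s Hs j Hj). lra. }
  destruct (F_cont (f s) q Hbox q_idx eps (cond_pos eps)) as [del [Hdel Hcont]].
  assert (Hrad : 0 < Rmin del (Rmin (s - rL) (rU - s))).
  { repeat apply Rmin_glb_lt; lra. }
  exists (mkposreal _ Hrad). intros s' Hs'.
  change (Rabs (s' - s) < Rmin del (Rmin (s - rL) (rU - s))) in Hs'.
  pose proof (Rmin_l del (Rmin (s - rL) (rU - s))).
  pose proof (Rmin_r del (Rmin (s - rL) (rU - s))).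
  pose proof (Rmin_l (s - rL) (rU - s)). pose proof (Rmin_r (s - rL) (rU - s)).
  assert (Hs'in : rL < s' < rU) by (apply Rabs_def2 in Hs'; lra).
  apply Hcont. intros j Hj.
  apply (Rle_lt_trans _ _ _ (f_lip s s' Hs Hs'in j Hj)). lra.
Qed.

Lemma path_crosses_zero : exists s, rL < s < rU /\ F (f s) q = 0.
Proof.
  destruct path_takes_negative as [s1 [Hs1 Hneg]].
  destruct path_takes_positive as [s2 [Hs2 Hpos]].
  destruct (Rlt_or_le s1 s2) as [Hlt|Hle].
  - destruct (Ranalysis5.IVT_interv (fun s => F (f s) q) s1 s2) as [s [Hs Hzero]];
      [intros a Ha; apply path_continuous; lra| exact Hlt| exact Hneg| exact Hpos|].
    exists s. split; [lra| exact Hzero].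
  - assert (Hlt : s2 < s1) by (destruct Hle as [|<-]; [assumption| lra]).
    destruct (Ranalysis5.IVT_interv (- fun s => F (f s) q)%F s2 s1) as [s [Hs Hzero]];
      [intros a Ha; apply continuity_pt_opp, path_continuous; lra| exact Hlt|
       unfold opp_fct; lra| unfold opp_fct; lra|].
    exists s. split; [lra|]. unfold opp_fct in Hzero. lra.
Qed.

End Path.

Definition solvable_first (m : nat) : Prop :=
  forall v, in_Omega N rL rU v ->
  exists z, in_Omega N rL rU z /\
    (forall j, in_idx N j -> (Z.of_nat m <= j + N)%Z -> z j = v j) /\
    (forall i, in_idx N i -> (i + N < Z.of_nat m)%Z -> F z i = 0).

Lemma solvable_first_succ (m : nat) :
  (Z.of_nat m < 2 * N + 1)%Z -> solvable_first m -> solvable_first (S m).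
Proof.
  intros Hm IH v Hv.
  set (q := (- N + Z.of_nat m)%Z).
  assert (q_idx : in_idx N q) by (unfold q, in_idx; lia).
  set (Q := fun s z => in_Omega N rL rU z /\
       (forall j, in_idx N j -> (Z.of_nat m <= j + N)%Z -> z j = upd v q s j) /\
       (forall i, in_idx N i -> (i + N < Z.of_nat m)%Z -> F z i = 0)).
  assert (Q_ex : forall s, rL < s < rU -> exists z, Q s z).
  { intros s Hs. apply IH. intros j Hj. unfold upd.
    destruct (Z.eqb j q); [exact Hs| exact (Hv j Hj)]. }
  set (f := fun s => epsilon (inhabits v) (Q s)).
  assert (f_spec : forall s, rL < s < rU -> Q s (f s)).
  { intros s Hs. exact (epsilon_spec _ _ (Q_ex s Hs)). }
  assert (f_q : forall s, rL < s < rU -> f s q = s).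
  { intros s Hs. destruct (f_spec s Hs) as [_ [Hfix _]].
    rewrite (Hfix q q_idx ltac:(unfold q; lia)). unfold upd. rewrite Z.eqb_refl. reflexivity. }
  assert (f_lip : forall s s', rL < s < rU -> rL < s' < rU ->
            forall j, in_idx N j -> Rabs (f s' j - f s j) <= Rabs (s' - s)).
  { intros s s' Hs Hs'.
    destruct (f_spec s Hs) as [Hin [Hfix Hzero]]. destruct (f_spec s' Hs') as [Hin' [Hfix' Hzero']].
    apply (coord_diff_le_of_agree (fun i => (i + N < Z.of_nat m)%Z)); [apply Rabs_pos|
      exact Hin| exact Hin'| intros i Hi Him; rewrite Hzero, Hzero'; auto|].
    intros k Hk Hkm. destruct (Z.eq_dec k q) as [->|Hkq].
    - rewrite f_q, f_q by assumption. apply Rle_refl.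
    - rewrite Hfix, Hfix' by first [exact Hk| unfold q in Hkq; lia].
      unfold upd. rewrite (proj2 (Z.eqb_neq k q) Hkq), Rminus_diag, Rabs_R0. apply Rabs_pos. }
  destruct (path_crosses_zero q f q_idx (fun s Hs => proj1 (f_spec s Hs)) f_q f_lip)
    as [s [Hs Hq0]].
  destruct (f_spec s Hs) as [Hin [Hfix Hzero]].
  exists (f s). split; [exact Hin| split].
  - intros j Hj Hjm. rewrite Hfix by first [exact Hj| lia]. unfold upd.
    rewrite (proj2 (Z.eqb_neq j q) ltac:(unfold q; lia)). reflexivity.
  - intros i Hi Him. destruct (Z.eq_dec i q) as [->|Hiq]; [exact Hq0|].
    apply Hzero; [exact Hi| unfold q in Hiq; lia].
Qed.

Lemma zero_exists : exists z, in_Omega N rL rU z /\ forall i, in_idx N i -> F z i = 0.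
Proof.
  assert (Hsolv : forall m, (Z.of_nat m <= 2 * N + 1)%Z -> solvable_first m).
  { induction m as [|m IH]; intros Hm.
    - intros v Hv. exists v. split; [exact Hv| split].
      + intros j _ _. reflexivity.
      + intros i Hi Hneg. exfalso. unfold in_idx in Hi. lia.
    - apply solvable_first_succ; [lia| apply IH; lia]. }
  destruct (Hsolv (Z.to_nat (2 * N + 1)) ltac:(lia) (fun _ => (rL + rU) / 2))
    as [z [Hz [_ Hzero]]]; [intros j _; lra|].
  exists z. split; [exact Hz|]. intros i Hi. apply Hzero; [exact Hi| unfold in_idx in Hi; lia].
Qed.

End BoxZero.

Lemma sum_idx_ext (N : Z) (f g : Z -> R) :
  (forall j, f j = g j) -> sum_idx N f = sum_idx N g.
Proof. intro H. apply sum_eq. intros k _. apply H. Qed.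

Lemma sum_idx_plus (N : Z) (f g : Z -> R) :
  sum_idx N (fun j => f j + g j) = sum_idx N f + sum_idx N g.
Proof. apply sum_plus. Qed.

Lemma sum_idx_scal (N : Z) (c : R) (f : Z -> R) :
  sum_idx N (fun j => c * f j) = c * sum_idx N f.
Proof. unfold sum_idx. rewrite scal_sum. apply sum_eq. intros k _. ring. Qed.

Lemma sum_idx_le (N : Z) (f g : Z -> R) : (0 <= N)%Z ->
  (forall j, in_idx N j -> f j <= g j) -> sum_idx N f <= sum_idx N g.
Proof. intros HN H. apply sum_Rle. intros k Hk. apply H. unfold in_idx. lia. Qed.

Lemma sum_f_R0_indicator (f : nat -> R) (k0 M : nat) : (k0 <= M)%nat ->
  sum_f_R0 (fun k => if Nat.eqb k k0 then f k else 0) M = f k0.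
Proof.
  induction M as [|M IH]; intros Hk0; cbn [sum_f_R0].
  - replace k0 with 0%nat by lia. reflexivity.
  - destruct (Nat.eqb_spec (S M) k0) as [<-|Hne].
    + rewrite sum_eq_R0; [ring|]. intros k Hk.
      destruct (Nat.eqb_spec k (S M)); [lia| reflexivity].
    + rewrite IH by lia. ring.
Qed.

Lemma sum_idx_indicator (N a : Z) (f : Z -> R) : in_idx N a ->
  sum_idx N (fun j => if Z.eqb j a then f j else 0) = f a.
Proof.
  intro Ha. unfold in_idx in Ha. unfold sum_idx.
  rewrite (sum_eq _ (fun k => if Nat.eqb k (Z.to_nat (a + N)) then f (Z.of_nat k - N)%Z else 0)).
  - rewrite sum_f_R0_indicator by lia. f_equal. lia.
  - intros k _.
    destruct (Z.eqb_spec (Z.of_nat k - N) a); destruct (Nat.eqb_spec k (Z.to_nat (a + N)));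
      reflexivity || lia.
Qed.

Lemma diag_dominant_row_pos (N i : Z) (A d : Z -> R) : in_idx N i ->
  A i > sum_idx N (fun j => if Z.eqb j i then 0 else Rabs (A j)) ->
  (forall k, in_idx N k -> Rabs (d k) <= Rabs (d i)) -> d i <> 0 ->
  sum_idx N (fun j => A j * d j) * d i > 0.
Proof.
  intros Hi Hdom Hmax Hdi.
  assert (HN : (0 <= N)%Z) by (unfold in_idx in Hi; lia).
  assert (Hsplit : sum_idx N (fun j => A j * d j) * d i =
            A i * d i * d i + sum_idx N (fun j => if Z.eqb j i then 0 else A j * d j * d i)).
  { rewrite Rmult_comm, <- sum_idx_scal.
    rewrite (sum_idx_ext N _ (fun j => (if Z.eqb j i then A j * d j * d i else 0) +
                                       (if Z.eqb j i then 0 else A j * d j * d i)))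
      by (intro j; destruct (Z.eqb j i); ring).
    rewrite sum_idx_plus, (sum_idx_indicator N i (fun j => A j * d j * d i) Hi). reflexivity. }
  assert (Hoff : - (d i * d i) * sum_idx N (fun j => if Z.eqb j i then 0 else Rabs (A j))
                 <= sum_idx N (fun j => if Z.eqb j i then 0 else A j * d j * d i)).
  { rewrite <- sum_idx_scal. apply sum_idx_le; [exact HN|]. intros j Hj.
    destruct (Z.eqb j i); [lra|].
    assert (Hprod : Rabs (A j * d j * d i) <= Rabs (A j) * (d i * d i)).
    { assert (Hsq : Rabs (d i) * Rabs (d i) = d i * d i).
      { rewrite <- Rabs_mult. apply Rabs_pos_eq. nra. }
      rewrite !Rabs_mult, <- Hsq, Rmult_assoc.
      apply Rmult_le_compat_l; [apply Rabs_pos|].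
      apply Rmult_le_compat_r; [apply Rabs_pos| exact (Hmax j Hj)]. }
    pose proof (Rle_abs (- (A j * d j * d i))). rewrite Rabs_Ropp in *. lra. }
  assert (Hsq : d i * d i > 0) by (apply Rsqr_pos_lt in Hdi; exact Hdi).
  rewrite Hsplit. nra.
Qed.

Lemma sup_continuous_at_plus (N : Z) (G H : (Z -> R) -> R) (x : Z -> R) :
  sup_continuous_at N G x -> sup_continuous_at N H x ->
  sup_continuous_at N (fun r => G r + H r) x.
Proof.
  intros HG HH eps Heps.
  destruct (HG (eps / 2) ltac:(lra)) as [d1 [Hd1 H1]].
  destruct (HH (eps / 2) ltac:(lra)) as [d2 [Hd2 H2]].
  exists (Rmin d1 d2). split; [apply Rmin_glb_lt; assumption|]. intros y Hy.
  specialize (H1 y (fun j Hj => Rlt_le_trans _ _ _ (Hy j Hj) (Rmin_l d1 d2))).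
  specialize (H2 y (fun j Hj => Rlt_le_trans _ _ _ (Hy j Hj) (Rmin_r d1 d2))).
  replace (G y + H y - (G x + H x)) with ((G y - G x) + (H y - H x)) by ring.
  apply (Rle_lt_trans _ _ _ (Rabs_triang _ _)). lra.
Qed.

Lemma sup_continuous_at_comp (N : Z) (g : R -> R) (G : (Z -> R) -> R) (x : Z -> R) :
  continuity_pt g (G x) -> sup_continuous_at N G x ->
  sup_continuous_at N (fun r => g (G r)) x.
Proof.
  intros Hg HG eps Heps.
  destruct (proj1 (continuity_pt_locally g (G x)) Hg (mkposreal eps Heps)) as [d1 Hd1].
  destruct (HG d1 (cond_pos d1)) as [del [Hdel Hclose]].
  exists del. split; [exact Hdel|]. intros y Hy. exact (Hd1 (G y) (Hclose y Hy)).
Qed.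

Inductive bond : Type := Bond (w al be : R) (a b : Z).

Definition bond_weight (t : bond) : R := let 'Bond w _ _ _ _ := t in w.

Definition bond_arg (t : bond) (r : Z -> R) : R :=
  let 'Bond _ al be a b := t in al * r a + be * r b.

Definition bond_in (N : Z) (t : bond) : Prop :=
  let 'Bond _ al be a b := t in 0 < al /\ 0 <= be /\ in_idx N a /\ in_idx N b.

Definition bonds_force (phi : R -> R) (ts : list bond) (r : Z -> R) : R :=
  fold_right (fun t acc => bond_weight t * eta phi (bond_arg t r) + acc) 0 ts.

Definition bonds_deriv (phi : R -> R) (ts : list bond) (r d : Z -> R) : R :=
  fold_right (fun t acc =>
    bond_weight t * Derive (eta phi) (bond_arg t r) * bond_arg t d + acc) 0 ts.

Definition unit_vec (j : Z) : Z -> R := fun k => if Z.eqb k j then 1 else 0.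

Lemma bond_arg_pos (N : Z) (t : bond) (r : Z -> R) : bond_in N t ->
  (forall k, in_idx N k -> 0 < r k) -> 0 < bond_arg t r.
Proof.
  destruct t as [w al be a b]. intros [Hal [Hbe [Ha Hb]]] Hr. simpl.
  pose proof (Hr a Ha). pose proof (Hr b Hb). nra.
Qed.

Lemma bond_arg_affine (t : bond) (x d : Z -> R) (s : R) :
  bond_arg t (fun k => x k + s * d k) = bond_arg t x + s * bond_arg t d.
Proof. destruct t; simpl; ring. Qed.

Lemma bond_arg_continuous (N : Z) (t : bond) (x : Z -> R) :
  bond_in N t -> sup_continuous_at N (bond_arg t) x.
Proof.
  destruct t as [w al be a b]. intros [Hal [Hbe [Ha Hb]]] eps Heps.
  exists (eps / (al + be)). split; [apply Rdiv_lt_0_compat; lra|]. intros y Hy. simpl.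
  specialize (Hy a Ha) as Hya. specialize (Hy b Hb) as Hyb.
  replace (al * y a + be * y b - (al * x a + be * x b))
    with (al * (y a - x a) + be * (y b - x b)) by ring.
  apply (Rle_lt_trans _ _ _ (Rabs_triang _ _)).
  rewrite !Rabs_mult, (Rabs_pos_eq al), (Rabs_pos_eq be) by lra.
  assert (Hscale : (al + be) * (eps / (al + be)) = eps) by (field; lra).
  pose proof (Rabs_pos (y b - x b)). nra.
Qed.

Lemma sum_idx_bond_arg (N : Z) (t : bond) (d : Z -> R) : bond_in N t ->
  sum_idx N (fun j => bond_arg t (unit_vec j) * d j) = bond_arg t d.
Proof.
  destruct t as [w al be a b]. intros [_ [_ [Ha Hb]]]. simpl. unfold unit_vec.
  rewrite (sum_idx_ext N _ (fun j => al * (if Z.eqb j a then d j else 0) +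
                                     be * (if Z.eqb j b then d j else 0))).
  - rewrite sum_idx_plus, !sum_idx_scal, !sum_idx_indicator by assumption. reflexivity.
  - intro j. rewrite (Z.eqb_sym a j), (Z.eqb_sym b j).
    destruct (Z.eqb j a); destruct (Z.eqb j b); ring.
Qed.

Lemma sum_idx_bonds_deriv (phi : R -> R) (N : Z) (ts : list bond) (r d : Z -> R) :
  List.Forall (bond_in N) ts ->
  sum_idx N (fun j => bonds_deriv phi ts r (unit_vec j) * d j) = bonds_deriv phi ts r d.
Proof.
  induction 1 as [|t ts Ht _ IH]; simpl.
  - unfold sum_idx. rewrite sum_eq_R0; [reflexivity| intros; ring].
  - rewrite (sum_idx_ext N _ (fun j => bond_weight t * Derive (eta phi) (bond_arg t r) *
                                       (bond_arg t (unit_vec j) * d j) +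
                                       bonds_deriv phi ts r (unit_vec j) * d j))
      by (intro j; ring).
    rewrite sum_idx_plus, sum_idx_scal, sum_idx_bond_arg, IH by exact Ht. reflexivity.
Qed.

Section BondSums.

Variable phi : R -> R.
Hypothesis eta_derivable : forall u, 0 < u -> ex_derive (eta phi) u.

Lemma bonds_force_continuous (N : Z) (ts : list bond) (x : Z -> R) :
  List.Forall (bond_in N) ts -> (forall k, in_idx N k -> 0 < x k) ->
  sup_continuous_at N (bonds_force phi ts) x.
Proof.
  intros Hts Hx. induction Hts as [|t ts Ht _ IH]; simpl.
  - intros eps Heps. exists 1. split; [lra|]. intros y _. rewrite Rminus_diag, Rabs_R0. exact Heps.
  - apply (sup_continuous_at_plus N (fun r => bond_weight t * eta phi (bond_arg t r))); [|exact IH].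
    apply (sup_continuous_at_comp N (fun u => bond_weight t * eta phi u));
      [|exact (bond_arg_continuous N t x Ht)].
    apply continuity_pt_filterlim.
    apply (ex_derive_continuous (fun u => bond_weight t * eta phi u)).
    apply ex_derive_mult; [apply ex_derive_const|].
    exact (eta_derivable _ (bond_arg_pos N t x Ht Hx)).
Qed.

Lemma bonds_force_dir_derive (N : Z) (ts : list bond) (x d : Z -> R) (s : R) :
  List.Forall (bond_in N) ts -> (forall k, in_idx N k -> 0 < x k + s * d k) ->
  is_derive (fun s => bonds_force phi ts (fun k => x k + s * d k)) s
            (bonds_deriv phi ts (fun k => x k + s * d k) d).
Proof.
  intros Hts Hpos. induction Hts as [|t ts Ht _ IH]; simpl.
  - apply (is_derive_const 0).
  - apply (is_derive_plus (fun s => bond_weight t * eta phi (bond_arg t (fun k => x k + s * d k)))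
             (fun s => bonds_force phi ts (fun k => x k + s * d k))); [|exact IH].
    assert (Hu : 0 < bond_arg t x + s * bond_arg t d).
    { rewrite <- bond_arg_affine. exact (bond_arg_pos N t _ Ht Hpos). }
    rewrite bond_arg_affine.
    apply (is_derive_ext (fun s => bond_weight t * eta phi (bond_arg t x + s * bond_arg t d)));
      [intro; rewrite bond_arg_affine; reflexivity|].
    auto_derive; [exact (eta_derivable _ Hu)|].
    change (fun u => eta phi u) with (eta phi). ring.
Qed.

End BondSums.

Definition psiF_bonds (K i : Z) : list bond :=
  if andb (- K + 1 <=? i)%Z (i <=? K - 1)%Z then
    (Bond 1 1 0 i i :: Bond 1 1 1 i (i - 1) :: Bond 1 1 1 i (i + 1) :: Bond 2 2 0 K K ::
     Bond (-1) 1 1 K (K - 1) :: Bond (-1) 1 1 K (K + 1) :: nil)%Z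
  else Bond 1 1 0 i i :: Bond 2 2 0 i i :: nil.

Lemma psiF_bonds_force (phi : R -> R) (K : Z) (r : Z -> R) (i : Z) :
  psiF phi K r i = bonds_force phi (psiF_bonds K i) r.
Proof.
  unfold psiF, psiF_bonds. destruct (andb _ _); simpl;
    rewrite ?Rmult_0_l, ?Rplus_0_r, ?Rmult_1_l; ring.
Qed.

Lemma psiF_bonds_in (N K i : Z) : (0 < K)%Z -> (K < N - 1)%Z -> in_idx N i ->
  List.Forall (bond_in N) (psiF_bonds K i).
Proof.
  unfold in_idx. intros HK HKN Hi. unfold psiF_bonds.
  destruct (Z.leb_spec (- K + 1) i); destruct (Z.leb_spec i (K - 1)); simpl;
    repeat constructor; unfold in_idx; lra || lia.
Qed.

Section QCForce.

Variable phi : R -> R.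
Hypothesis eta_derivable : forall u, 0 < u -> ex_derive (eta phi) u.
Variables N K : Z.
Hypothesis K_pos : (0 < K)%Z.
Hypothesis K_lt : (K < N - 1)%Z.

Lemma DpsiF_bonds (r : Z -> R) (i j : Z) : in_idx N i -> (forall k, in_idx N k -> 0 < r k) ->
  DpsiF phi K r i j = bonds_deriv phi (psiF_bonds K i) r (unit_vec j).
Proof.
  intros Hi Hr. unfold DpsiF.
  set (G := fun s => bonds_force phi (psiF_bonds K i) (fun k => r k + s * unit_vec j k)).
  rewrite (Derive_ext _ (fun x => G (x - r j))).
  2:{ intro x. unfold G. rewrite psiF_bonds_force. f_equal.
      apply functional_extensionality. intro k. unfold upd, unit_vec.
      destruct (Z.eqb_spec k j) as [->|]; ring. }
  assert (Hr0 : (fun k => r k + (r j - r j) * unit_vec j k) = r).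
  { apply functional_extensionality. intro k. ring. }
  assert (HG := bonds_force_dir_derive phi eta_derivable N (psiF_bonds K i) r (unit_vec j)
                  (r j - r j) (psiF_bonds_in N K i K_pos K_lt Hi)
                  ltac:(intros k Hk; rewrite Rminus_diag, Rmult_0_l, Rplus_0_r; exact (Hr k Hk))).
  rewrite Hr0 in HG.
  apply is_derive_unique.
  replace (bonds_deriv phi (psiF_bonds K i) r (unit_vec j))
    with (scal 1 (bonds_deriv phi (psiF_bonds K i) r (unit_vec j))) by apply Rmult_1_l.
  apply (is_derive_comp G (fun x => x - r j)); [exact HG|].
  auto_derive; [exact I| ring].
Qed.

Lemma psiF_mean_value (rL rU : R) (x y : Z -> R) (i : Z) : 0 <= rL ->
  in_Omega N rL rU x -> in_Omega N rL rU y -> in_idx N i ->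
  exists p, in_Omega N rL rU p /\
    psiF phi K y i - psiF phi K x i = sum_idx N (fun j => DpsiF phi K p i j * (y j - x j)).
Proof.
  intros HrL Hx Hy Hi.
  set (ts := psiF_bonds K i). set (d := fun k => y k - x k).
  assert (Hts : List.Forall (bond_in N) ts) by exact (psiF_bonds_in N K i K_pos K_lt Hi).
  assert (seg_in : forall s, 0 <= s <= 1 -> in_Omega N rL rU (fun k => x k + s * d k)).
  { intros s Hs k Hk. specialize (Hx k Hk). specialize (Hy k Hk). unfold d.
    destruct (Rle_or_lt (x k) (y k)); split; nra. }
  assert (seg_pos : forall s, 0 <= s <= 1 -> forall k, in_idx N k -> 0 < x k + s * d k).
  { intros s Hs k Hk. specialize (seg_in s Hs k Hk). simpl in seg_in. lra. }
  destruct (MVT_cor2 (fun s => bonds_force phi ts (fun k => x k + s * d k))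
              (fun s => bonds_deriv phi ts (fun k => x k + s * d k) d) 0 1 Rlt_0_1
              (fun s Hs => proj1 (is_derive_Reals _ _ _)
                 (bonds_force_dir_derive phi eta_derivable N ts x d s Hts (seg_pos s Hs))))
    as [c [Hmvt Hc]].
  exists (fun k => x k + c * d k). split; [apply seg_in; lra|].
  assert (Hend1 : (fun k => x k + 1 * d k) = y).
  { apply functional_extensionality. intro k. unfold d. ring. }
  assert (Hend0 : (fun k => x k + 0 * d k) = x).
  { apply functional_extensionality. intro k. ring. }
  cbv beta in Hmvt. rewrite Hend1, Hend0, Rminus_0_r, Rmult_1_r in Hmvt.
  rewrite !psiF_bonds_force. fold ts. rewrite Hmvt.
  rewrite <- (sum_idx_bonds_deriv phi N ts _ d Hts).
  apply sum_idx_ext. intro j.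
  rewrite DpsiF_bonds; [reflexivity| exact Hi| apply seg_pos; lra].
Qed.

Lemma psiF_box_continuous (rL rU : R) (Phi : Z -> R) : 0 < rL ->
  box_continuous N rL rU (fun r i => psiF phi K r i - Phi i).
Proof.
  intros HrL x i Hx Hi eps Heps.
  destruct (bonds_force_continuous phi eta_derivable N (psiF_bonds K i) x
              (psiF_bonds_in N K i K_pos K_lt Hi)
              (fun k Hk => Rlt_le_trans _ _ _ HrL (proj1 (Hx k Hk)))
              eps Heps) as [del [Hdel Hclose]].
  exists del. split; [exact Hdel|]. intros y Hy.
  rewrite !psiF_bonds_force. replace (_ - Phi i - (_ - Phi i)) with
    (bonds_force phi (psiF_bonds K i) y - bonds_force phi (psiF_bonds K i) x) by ring.
  exact (Hclose y Hy).
Qed.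

Lemma psiF_max_coord_monotone (rL rU : R) (Phi : Z -> R) : 0 <= rL ->
  (forall r, in_Omega N rL rU r -> forall i, in_idx N i ->
     DpsiF phi K r i i > sum_idx N (fun j => if Z.eqb j i then 0 else Rabs (DpsiF phi K r i j))) ->
  max_coord_monotone N rL rU (fun r i => psiF phi K r i - Phi i).
Proof.
  intros HrL Hdd x y i Hx Hy Hi Hmax Hne.
  destruct (psiF_mean_value rL rU x y i HrL Hx Hy Hi) as [p [Hp Hmv]].
  replace (psiF phi K y i - Phi i - (psiF phi K x i - Phi i))
    with (psiF phi K y i - psiF phi K x i) by ring.
  rewrite Hmv.
  apply (diag_dominant_row_pos N i (fun j => DpsiF phi K p i j) (fun j => y j - x j) Hi
           (Hdd p Hp i Hi)).
  - exact Hmax.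
  - intro H. apply Hne. lra.
Qed.

End QCForce.

Lemma hom_at_one (phi : R -> R) (K : Z) (Phi r : Z -> R) (i : Z) :
  hom phi K Phi r 1 i = psiF phi K r i - Phi i.
Proof. unfold hom. ring. Qed.

Theorem lemma4p3
  (phi : R -> R)
  (* phi in C^3((0,oo)) *)
  (Hphi : forall x, 0 < x ->
     ex_derive_n phi 1 x /\ ex_derive_n phi 2 x /\ ex_derive_n phi 3 x /\
     continuous (Derive_n phi 3) x)
  (a0 rt1 rt2 a1 : R)
  (Ha : 0 < a0 /\ a0 < rt1 /\ rt1 < rt2 /\ rt2 < 2 * a0 /\ a0 < a1)
  (Heta1a : forall r, 0 < r < rt1 -> Derive (eta phi) r > 0)
  (Heta1b : forall r, r > rt1 -> Derive (eta phi) r < 0)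
  (Heta2a : forall r, 0 < r < rt2 -> Derive (Derive (eta phi)) r < 0)
  (Heta2b : forall r, r > rt2 -> Derive (Derive (eta phi)) r > 0)
  (Hhat0a : forall r, 0 < r < a0 -> eta_hat phi r < 0)
  (Hhat0b : forall r, r > a0 -> eta_hat phi r > 0)
  (Hhat1a : forall r, 0 < r < a1 -> Derive (eta_hat phi) r > 0)
  (Hhat1b : forall r, r > a1 -> Derive (eta_hat phi) r < 0)
  (N K : Z) (HK : (0 < K)%Z) (HKN : (K < N - 1)%Z)
  (Phi : Z -> R)
  (rL rU : R) (Hr : 0 < rL /\ rL < rU /\ rU < a1)
  (Hbdry : forall (i : Z) (t : R) (r : Z -> R),
     in_idx N i -> 0 <= t <= 1 -> in_bdry_Omega N rL rU r ->
     (r i = rU -> hom phi K Phi r t i > 0) /\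
     (r i = rL -> hom phi K Phi r t i < 0))
  (Hdd : forall r : Z -> R, in_Omega N rL rU r ->
     forall i, in_idx N i ->
       DpsiF phi K r i i >
       sum_idx N (fun j => if Z.eqb j i then 0 else Rabs (DpsiF phi K r i j))) :
  exists r : Z -> R,
    in_Omega N rL rU r /\ (forall j, in_idx N j -> psiF phi K r j = Phi j) /\
    (forall r' : Z -> R,
       in_Omega N rL rU r' -> (forall j, in_idx N j -> psiF phi K r' j = Phi j) ->
       forall j, in_idx N j -> r' j = r j).
Proof.
  destruct Hr as [HrL [HrLU _]].
  assert (eta_derivable : forall u, 0 < u -> ex_derive (eta phi) u)
    by (intros u Hu; exact (proj1 (proj2 (Hphi u Hu)))).
  assert (N_nonneg : (0 <= N)%Z) by lia.
  set (F := fun r i => psiF phi K r i - Phi i).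
  assert (F_cont : box_continuous N rL rU F)
    by exact (psiF_box_continuous phi eta_derivable N K HK HKN rL rU Phi HrL).
  assert (F_bdry : boundary_signs N rL rU F).
  { intros r i Hi Hb. unfold F. rewrite <- !hom_at_one. exact (Hbdry i 1 r Hi ltac:(lra) Hb). }
  assert (F_mono : max_coord_monotone N rL rU F)
    by exact (psiF_max_coord_monotone phi eta_derivable N K HK HKN rL rU Phi (Rlt_le _ _ HrL) Hdd).
  destruct (zero_exists N rL rU F N_nonneg HrLU F_cont F_bdry F_mono) as [z [Hz Hzero]].
  exists z. split; [exact Hz| split].
  - intros j Hj. specialize (Hzero j Hj). unfold F in Hzero. lra.
  - intros r' Hr' Hsol. apply (zero_unique N rL rU F N_nonneg F_mono z r' Hz Hr' Hzero).
    intros i Hi. unfold F. rewrite (Hsol i Hi). ring.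
Qed.
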